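(* Let $q$ be a prime power, $b$ a positive integer, and $M,D$ positive integers with $M>q^b$ and $D\ge b-1$. Then $N_{b+1}(M,D)\le N_b(M,D-1)$.
   Context: For a positive integer $c$ and $\boldsymbol{z}=(z_0,\ldots,z_{n-1}),\boldsymbol{w}\in\mathbb{F}_q^n$, $d_c(\boldsymbol{z},\boldsymbol{w})$ is the number of $i\in\{0,\ldots,n-1\}$ with $(z_i,\ldots,z_{i+c-1})\ne(w_i,\ldots,w_{i+c-1})$ (indices mod $n$). $N_c(M,D)$ is the smallest length $r$ such that there exist $M$ vectors $\boldsymbol{p}_1,\ldots,\boldsymbol{p}_M\in\mathbb{F}_q^r$ with $d_c(\boldsymbol{p}_i,\boldsymbol{p}_j)\ge D$ for all $i\ne j$. *)

From HB Require Import structures.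
From mathcomp Require Import all_boot all_order all_algebra all_field.
Set Implicit Arguments. Unset Strict Implicit. Unset Printing Implicit Defensive.

(* Vectors of length n over F are functions 'I_n -> F; indices are taken mod n. *)

Definition coordm (F : Type) (n : nat) (z : 'I_n -> F) (k : nat) (i0 : 'I_n) : F :=
  z (Ordinal (@ltn_pmod k n (leq_ltn_trans (leq0n i0) (ltn_ord i0)))).

(* d_c(z,w): number of i in {0..n-1} such that the windows
   (z_i,...,z_{i+c-1}) and (w_i,...,w_{i+c-1}) (indices mod n) differ *)
Definition dc (F : finFieldType) (c n : nat) (z w : 'I_n -> F) : nat :=
  #|[set i : 'I_n | [exists j : 'I_c, coordm z (i + j) i != coordm w (i + j) i]]|.

Definition code_exists (F : finFieldType) (c M D r : nat) : Prop :=
  exists p : 'I_M -> ('I_r -> F),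
    injective p /\ forall i j : 'I_M, i != j -> D <= dc c (p i) (p j).

Definition is_N (F : finFieldType) (c M D r : nat) : Prop :=
  code_exists F c M D r /\ forall r', code_exists F c M D r' -> r <= r'.

(* For two distinct words the positions i whose b-windows differ form a nonempty
   set W_b, and i is in W_(b+1) as soon as i or i + 1 is in W_b.  So W_b is a
   proper subset of W_(b+1) unless W_b is closed under i + 1 |-> i, i.e. is
   everything; hence d_(b+1) >= min(d_b + 1, n).  A code with more than
   q^b words has length r > D - 1, since otherwise the b-windows at position 0 of its
   words would be pairwise distinct; so an optimal code for N_b(M, D - 1) is also a code for
   N_(b+1)(M, D). *)

From mathcomp Require Import all_boot all_order all_algebra all_field.
From mathcomp Require Import zify.
From Stdlib Require Import Classical FunctionalExtensionality.
Set Implicit Arguments. Unset Strict Implicit. Unset Printing Implicit Defensive.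

Lemma coordm_mod (F : Type) n (z : 'I_n -> F) k k' (i0 i1 : 'I_n) :
  k %% n = k' %% n -> coordm z k i0 = coordm z k' i1.
Proof. by move=> eq_k; rewrite /coordm; congr (z _); apply: val_inj. Qed.

Lemma coordm_addn0 (F : Type) n (z : 'I_n -> F) (k i0 : 'I_n) :
  coordm z (k + 0) i0 = z k.
Proof. by rewrite /coordm; congr (z _); apply: val_inj; rewrite /= addn0 modn_small. Qed.

Lemma ordS_closed_setT n (A : {set 'I_n}) (a : 'I_n) :
  (forall i, ordS i \in A -> i \in A) -> a \in A -> A = setT.
Proof.
move=> closedA Aa.
have reach k : forall x : 'I_n, (x + k) %% n = a -> x \in A.
  elim: k => [|k IHk] x.
    by rewrite addn0 modn_small // => /val_inj ->.
  move=> xk; apply/closedA/IHk.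
  by rewrite /= modnDml addSnnS.
apply/setP => x; rewrite inE; apply: (reach (a + n - x)).
have -> : x + (a + n - x) = a + n by have := ltn_ord x; lia.
by rewrite modnDr modn_small.
Qed.

Section Windows.
Variables (F : eqType) (n : nat) (z w : 'I_n -> F).

Definition window_diff c : {set 'I_n} :=
  [set i : 'I_n | [exists j : 'I_c, coordm z (i + j) i != coordm w (i + j) i]].

Lemma window_diff_subS c : window_diff c \subset window_diff c.+1.
Proof.
apply/subsetP => i; rewrite !inE => /existsP [j neq_j]; apply/existsP.
by exists (widen_ord (leqnSn c) j).
Qed.

Lemma window_diffS_ordS c i : ordS i \in window_diff c -> i \in window_diff c.+1.
Proof.
rewrite !inE => /existsP [j neq_j]; apply/existsP; exists (lift ord0 j).
have eq_k : (i + lift ord0 j) %% n = (ordS i + j) %% n.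
  by rewrite /= modnDml addSnnS.
by rewrite (coordm_mod z i (ordS i) eq_k) (coordm_mod w i (ordS i) eq_k).
Qed.

Lemma window_diff_neq0 b : 0 < b -> z <> w -> window_diff b != set0.
Proof.
move=> b_gt0; apply: contra_notN => /eqP W0.
apply: functional_extensionality => k; apply/eqP.
have : k \notin window_diff b by rewrite W0 inE.
rewrite inE negb_exists => /forallP /(_ (Ordinal b_gt0)).
by rewrite negbK /= !coordm_addn0.
Qed.

Lemma window_diff_card_succ b : 0 < b -> z <> w ->
  minn #|window_diff b|.+1 n <= #|window_diff b.+1|.
Proof.
move=> b_gt0 neq_zw; have /set0Pn [a Wa] := window_diff_neq0 b_gt0 neq_zw.
have [eq_W|neq_W] := eqVneq (window_diff b) (window_diff b.+1).
  have full : window_diff b = setT.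
    by apply: (ordS_closed_setT _ Wa) => i /window_diffS_ordS; rewrite -eq_W.
  by rewrite -eq_W full cardsT card_ord geq_minr.
have proper_W : window_diff b \proper window_diff b.+1.
  by rewrite properEneq neq_W window_diff_subS.
exact: leq_trans (geq_minl _ _) (proper_card proper_W).
Qed.

End Windows.

Lemma dcE (F : finFieldType) c n (z w : 'I_n -> F) : dc c z w = #|window_diff z w c|.
Proof. by []. Qed.

Lemma dc_succ (F : finFieldType) b n (z w : 'I_n -> F) : 0 < b -> z <> w ->
  minn (dc b z w).+1 n <= dc b.+1 z w.
Proof. exact: window_diff_card_succ. Qed.

Lemma code_length_gt (F : finFieldType) c M D r :
  #|F| ^ c < M -> code_exists F c M D r -> D < r.
Proof.
move=> card_lt [p [p_inj p_dist]]; rewrite ltnNge; apply/negP => r_le_D.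
have M_gt1 : 1 < M.
  apply: leq_ltn_trans card_lt.
  by rewrite expn_gt0; apply/orP; left; apply/card_gt0P; exists 0%R.
case: (posnP r) => [r0|r_gt0].
  subst r; have eq_p : p (Ordinal (ltnW M_gt1)) = p (Ordinal M_gt1).
    by apply: functional_extensionality => -[].
  by have /(congr1 val) := p_inj _ _ eq_p.
pose window0 i : {ffun 'I_c -> F} := [ffun k : 'I_c => coordm (p i) (0 + k) (Ordinal r_gt0)].
suff /leq_card : injective window0.
  by rewrite card_ord card_ffun card_ord leqNgt card_lt.
move=> i j eq_ij; apply/eqP; apply: contraT => neq_ij.
have full : window_diff (p i) (p j) c = setT.
  apply/eqP; rewrite eqEcard subsetT cardsT card_ord -dcE.
  exact: leq_trans r_le_D (p_dist _ _ neq_ij).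
have : Ordinal r_gt0 \in window_diff (p i) (p j) c by rewrite full inE.
rewrite inE => /existsP [k]; have := congr1 (fun g : {ffun 'I_c -> F} => g k) eq_ij.
by rewrite /window0 !ffunE => ->; rewrite eqxx.
Qed.

Lemma code_exists_succ (F : finFieldType) b M D r : 0 < b -> D <= r ->
  code_exists F b M D.-1 r -> code_exists F b.+1 M D r.
Proof.
move=> b_gt0 D_le_r [p [p_inj p_dist]]; exists p; split => // i j neq_ij.
have neq_p : p i <> p j by move/p_inj/eqP; apply/negP.
have := dc_succ b_gt0 neq_p; have := p_dist i j neq_ij; lia.
Qed.

Lemma exists_least (P : nat -> Prop) r :
  P r -> exists2 m, P m /\ (forall k, P k -> m <= k) & m <= r.
Proof.
elim/ltn_ind: r => r IHr Pr.
case: (classic (exists2 k, P k & k < r)) => [[k Pk lt_kr]|none].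
  have [m least_m le_mk] := IHr k lt_kr Pk.
  by exists m => //; apply: leq_trans le_mk (ltnW lt_kr).
exists r => //; split => // k Pk; rewrite leqNgt; apply/negP => lt_kr.
by apply: none; exists k.
Qed.

Theorem mainTheorem9 (F : finFieldType) (b M D : nat) :
  0 < b -> 0 < M -> 0 < D -> #|F| ^ b < M -> b - 1 <= D ->
  forall r, is_N F b M (D - 1) r ->
  exists r1, is_N F b.+1 M D r1 /\ r1 <= r.
Proof.
move=> b_gt0 _ D_gt0 card_lt _ r [code _].
have D_le_r : D <= r by have := code_length_gt card_lt code; lia.
rewrite subn1 in code.
have [r1 least_r1 le_r1] := exists_least (code_exists_succ b_gt0 D_le_r code).
by exists r1.
Qed.
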